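(* Let $I$ be an inverse semigroup generated by $k$ elements, and suppose there is a surjective idempotent-pure morphism from $I$ onto a finite semigroup $J$ of cardinality $n$. Then $|I|\le n(2^{kn}-1)$. *)

From mathcomp Require Import all_boot.
From Stdlib Require List.
Set Implicit Arguments. Unset Strict Implicit. Unset Printing Implicit Defensive.

Definition associative_op (T : Type) (mul : T -> T -> T) : Prop :=
  forall x y z, mul x (mul y z) = mul (mul x y) z.

Definition is_inverse (T : Type) (mul : T -> T -> T) (x y : T) : Prop :=
  mul (mul x y) x = x /\ mul (mul y x) y = y.

Definition inverse_semigroup (T : Type) (mul : T -> T -> T) : Prop :=
  associative_op mul /\ forall x, exists! y, is_inverse mul x y.

Definition idempotent_el (T : Type) (mul : T -> T -> T) (e : T) : Prop :=
  mul e e = e.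

Inductive generated (T : Type) (mul : T -> T -> T) (k : nat) (g : 'I_k -> T)
  : T -> Prop :=
| gen_base : forall i, generated mul g (g i)
| gen_mul : forall x y, generated mul g x -> generated mul g y ->
            generated mul g (mul x y)
| gen_inv : forall x y, generated mul g x -> is_inverse mul x y ->
            generated mul g y.

Definition generates (T : Type) (mul : T -> T -> T) (k : nat) (g : 'I_k -> T) : Prop :=
  forall x, generated mul g x.

Definition is_morphism (A B : Type) (mulA : A -> A -> A) (mulB : B -> B -> B)
  (f : A -> B) : Prop :=
  forall x y, f (mulA x y) = mulB (f x) (f y).

Definition idempotent_pure (A B : Type) (mulA : A -> A -> A) (mulB : B -> B -> B)
  (f : A -> B) : Prop :=
  forall x, idempotent_el mulB (f x) -> idempotent_el mulA x.

(* Writing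
   R x = x x^-1 for the range idempotent of x, we attach to every x its
   signature
       Sig x = { (f (R x p), i) | R x <= R (p g_i) }  (a subset of J x [k]),
   and prove that x is determined by the pair (f x, Sig x), and that Sig x is
   never empty.  Hence |I| <= n (2^(kn) - 1). *)

From mathcomp Require Import all_boot.
From Stdlib Require List.
From Stdlib Require Import ClassicalEpsilon.

Set Implicit Arguments.
Unset Strict Implicit.
Unset Printing Implicit Defensive.

Section InverseSemigroup.
Variables (I : Type) (mul : I -> I -> I).
Hypothesis invS : inverse_semigroup mul.
Local Notation "x ** y" := (mul x y) (at level 40, left associativity).
Local Notation idem := (idempotent_el mul).

Lemma mulA x y z : x ** (y ** z) = x ** y ** z.
Proof. exact: (proj1 invS). Qed.

Lemma inv_spec x : {y | unique (is_inverse mul x) y}.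
Proof. apply: constructive_indefinite_description; exact: (proj2 invS x). Qed.

Definition inv x := proj1_sig (inv_spec x).

Lemma invP x : is_inverse mul x (inv x).
Proof. by rewrite /inv; case: (inv_spec x) => y []. Qed.

Lemma inv_uniq x y : is_inverse mul x y -> inv x = y.
Proof. by rewrite /inv; case: (inv_spec x) => z [_ Hz] /= /Hz. Qed.

Lemma mulKV x : x ** inv x ** x = x. Proof. exact: (proj1 (invP x)). Qed.
Lemma invKV x : inv x ** x ** inv x = inv x. Proof. exact: (proj2 (invP x)). Qed.

Lemma invK x : inv (inv x) = x.
Proof. by apply: inv_uniq; split; [exact: invKV | exact: mulKV]. Qed.

Lemma inv_idem e : idem e -> inv e = e.
Proof. by move=> He; apply: inv_uniq; split; rewrite !He. Qed.

Lemma mulKV_r X x : X ** x ** inv x ** x = X ** x.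
Proof. by rewrite -!mulA (mulA x (inv x) x) mulKV. Qed.
Lemma invKV_r X x : X ** inv x ** x ** inv x = X ** inv x.
Proof. by rewrite -!mulA (mulA (inv x) x (inv x)) invKV. Qed.

Lemma idem_r e : idem e -> forall X, X ** e ** e = X ** e.
Proof. by move=> He X; rewrite -mulA He. Qed.

(* Products of idempotents are idempotent: the inverse a of e h is
   idempotent, since inv (e h) = h a e; hence so is e h = inv a. *)
Lemma idem_mul e h : idem e -> idem h -> idem (e ** h).
Proof.
move=> He Hh; set a := inv (e ** h).
have aK : e ** h ** a ** e ** h = e ** h by rewrite -(mulA _ e h) mulKV.
have aKa X : X ** a ** e ** h ** a = X ** a.
  by rewrite -!mulA [e ** (h ** a)]mulA [a ** _]mulA invKV.
have inv_eh : inv (e ** h) = h ** a ** e.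
  apply: inv_uniq; split.
  - by rewrite !mulA (idem_r Hh) (idem_r He) aK.
  - by rewrite !mulA (idem_r He) (idem_r Hh) aKa.
have idem_a : idem a by rewrite /idempotent_el {1 2}/a inv_eh !mulA aKa.
by rewrite /idempotent_el -(invK (e ** h)) -/a (inv_idem idem_a).
Qed.

(* Idempotents commute: h e is an inverse of the idempotent e h. *)
Lemma idem_comm e h : idem e -> idem h -> e ** h = h ** e.
Proof.
move=> He Hh.
have Heh := idem_mul He Hh; have Hhe := idem_mul Hh He.
rewrite -(inv_idem Heh); apply: inv_uniq; split.
- by rewrite !mulA (idem_r Hh) (idem_r He) -(mulA (e ** h) e h) Heh.
- by rewrite !mulA (idem_r He) (idem_r Hh) -(mulA (h ** e) h e) Hhe.
Qed.

Definition R x := x ** inv x.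
Definition D x := inv x ** x.

Lemma R_idem x : idem (R x).
Proof. by rewrite /idempotent_el /R !mulA mulKV. Qed.
Lemma D_idem x : idem (D x).
Proof. by rewrite /idempotent_el /D !mulA invKV. Qed.

Lemma invM x y : inv (x ** y) = inv y ** inv x.
Proof.
apply: inv_uniq; split.
- have -> : x ** y ** (inv y ** inv x) ** (x ** y) = x ** (R y ** D x) ** y.
    by rewrite /R /D !mulA.
  by rewrite (idem_comm (R_idem y) (D_idem x)) /R /D !mulA mulKV mulKV_r.
- have -> : inv y ** inv x ** (x ** y) ** (inv y ** inv x)
            = inv y ** (D x ** R y) ** inv x by rewrite /R /D !mulA.
  by rewrite -(idem_comm (R_idem y) (D_idem x)) /R /D !mulA invKV invKV_r.
Qed.

(* The natural order, used here only between idempotents. *)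
Definition below a b := a ** b = a.

Lemma below_trans a b c : below a b -> below b c -> below a c.
Proof. by rewrite /below => Hab Hbc; rewrite -Hab -mulA Hbc. Qed.

Lemma R_mul_below x y : below (R (x ** y)) (R x).
Proof. by rewrite /below /R invM !mulA invKV_r. Qed.

Lemma R_idem_mul e x : idem e -> R (e ** x) = e ** R x.
Proof.
move=> He; rewrite {1}/R invM (inv_idem He).
have -> : e ** x ** (inv x ** e) = e ** (R x ** e) by rewrite /R !mulA.
by rewrite (idem_comm (R_idem x) He) mulA He.
Qed.

Lemma below_R e z : idem e -> below e (R z) -> R (e ** z) = e.
Proof. by move=> He; rewrite R_idem_mul. Qed.

Lemma below_R_mull z x y : below (R x) (R y) -> below (R (z ** x)) (R (z ** y)).
Proof.
rewrite /below => Hle.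
have -> : R (z ** x) ** R (z ** y) = z ** R x ** (D z ** R y) ** inv z.
  by rewrite /R /D !invM !mulA.
rewrite (idem_comm (D_idem z) (R_idem y)).
have -> : z ** R x ** (R y ** D z) ** inv z = z ** (R x ** R y) ** D z ** inv z.
  by rewrite !mulA.
by rewrite Hle /R /D invM !mulA invKV_r.
Qed.

Lemma R_mul_inv w y : R (w ** y ** inv y) = R (w ** y).
Proof. by rewrite /R !invM invK !mulA mulKV_r. Qed.

Lemma R_inv x : R (inv x) = D x.
Proof. by rewrite /R invK. Qed.

Lemma R_D x : R (D x) = D x.
Proof. by rewrite /R (inv_idem (D_idem x)); exact: D_idem. Qed.

Lemma eq_compatible x y : R x = R y -> idem (inv y ** x) -> x = y.
Proof.
move=> HR Hc.
have Hinv : inv (inv y ** x) = inv y ** x := inv_idem Hc.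
have Ex : x = y ** (inv y ** x) by rewrite mulA -/(R y) -HR /R mulKV.
have Ey : y = x ** (inv y ** x).
  by rewrite -Hinv invM invK mulA -/(R x) HR /R mulKV.
by rewrite {1}Ex {1}Ey -mulA Hc -Ey.
Qed.

Section IdempotentPure.
Variables (J : finType) (mulJ : J -> J -> J) (f : I -> J).
Hypotheses (mulJA : associative_op mulJ) (fM : is_morphism mul mulJ f)
  (fP : idempotent_pure mul mulJ f).
Local Notation "x *J y" := (mulJ x y) (at level 40, left associativity).

Lemma f_idem z : idem z -> f z *J f z = f z.
Proof. by move=> Hz; rewrite -fM Hz. Qed.

Lemma compatible_of_f x y : f x = f y -> idem (inv y ** x).
Proof.
move=> Hxy; apply: fP; rewrite /idempotent_el fM Hxy -fM.
exact: f_idem (D_idem y).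
Qed.

(* f x determines f (inv x): both images are "inverses" of f x in J whose
   associated idempotents commute, which forces them to be equal. *)
Lemma f_inv x y : f x = f y -> f (inv x) = f (inv y).
Proof.
move=> Hxy; set a := f x; set b := f (inv x); set c := f (inv y).
have bab : b *J a *J b = b by rewrite /a /b -!fM invKV.
have aca : a *J c *J a = a by rewrite /a Hxy /c -!fM mulKV.
have cac : c *J a *J c = c by rewrite /a Hxy /c -!fM invKV.
have aba : a *J b *J a = a by rewrite /a /b -!fM mulKV.
have commD : (b *J a) *J (c *J a) = (c *J a) *J (b *J a).
  by rewrite /a {2 3}Hxy /b /c -!fM (idem_comm (D_idem x) (D_idem y)).
have commR : (a *J b) *J (a *J c) = (a *J c) *J (a *J b).
  by rewrite /a {2 3}Hxy /b /c -!fM (idem_comm (R_idem x) (R_idem y)).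
have Eb : b = c *J a *J b.
  transitivity (b *J (a *J c *J a) *J b); first by rewrite aca bab.
  transitivity ((b *J a) *J (c *J a) *J b); first by rewrite !mulJA.
  by rewrite commD -!mulJA (mulJA b) bab !mulJA.
have Ec : c = c *J a *J b.
  transitivity (c *J (a *J b *J a) *J c); first by rewrite aba cac.
  transitivity (c *J ((a *J b) *J (a *J c))); first by rewrite !mulJA.
  by rewrite commR !mulJA cac.
by rewrite Eb -Ec.
Qed.

Lemma f_R x y : f x = f y -> f (R x) = f (R y).
Proof. by move=> Hxy; rewrite /R !fM (f_inv Hxy) Hxy. Qed.

Variables (k : nat) (g : 'I_k -> I).

(* The base point v matches x when every signature entry (f (R x p), i) of x,
   transported to v as f (v p), is realised as f (R v q) by some q with
   R v <= R (q g_i); the second clause does the same for the entries with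
   R x <= R (g_i), comparing with f v itself. *)
Definition matches (v x : I) : Prop :=
  (forall p i, below (R x) (R (p ** g i)) ->
     exists q, below (R v) (R (q ** g i)) /\ f (R v ** q) = f (v ** p)) /\
  (forall i, below (R x) (R (g i)) ->
     exists q, below (R v) (R (q ** g i)) /\ f (R v ** q) = f v).

Definition range_stable (x : I) : Prop :=
  forall v, matches v x -> R (v ** x) = R v.

Lemma range_stable_mul a b :
  range_stable a -> range_stable b -> range_stable (a ** b).
Proof.
move=> Sa Sb v [Hp H1].
have Rva : R (v ** a) = R v.
  apply: Sa; split => [p i Hle | i Hle].
  - exact: Hp (below_trans (R_mul_below a b) Hle).
  - exact: H1 (below_trans (R_mul_below a b) Hle).
rewrite mulA -Rva; apply: Sb; rewrite /matches Rva; split => [p i Hle | i Hle].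
- by rewrite -mulA; apply: Hp; rewrite -mulA; exact: below_R_mull.
- by apply: Hp; exact: below_R_mull.
Qed.

(* For a generator, the second clause yields q with R v q = v, whence
   R (v g_i) = R v R (q g_i) = R v. *)
Lemma range_stable_gen i : range_stable (g i).
Proof.
move=> v [_ H1].
have [q [Hq Hfq]] := H1 i (R_idem (g i)).
have Hqv : below (R v) (R q) := below_trans Hq (R_mul_below q (g i)).
have RvE : R (R v ** q) = R v := below_R (R_idem v) Hqv.
have vE : R v ** q = v := eq_compatible RvE (compatible_of_f Hfq).
by rewrite -{1}vE -mulA; exact: below_R (R_idem v) Hq.
Qed.

(* For an inverse generator, the first clause with p = g_i^-1 yields q
   with R v q g_i = v, whence R (v g_i^-1) = R (R v q g_i) = R v. *)
Lemma range_stable_gen_inv i : range_stable (inv (g i)).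
Proof.
move=> v [Hp _]; set gi := g i.
have Hle : below (R (inv gi)) (R (inv gi ** gi)).
  by rewrite R_inv -/(D gi) R_D; exact: D_idem.
have [q [Hq Hfq]] := Hp (inv gi) i Hle.
have RvE : R (R v ** q ** gi) = R v by rewrite -mulA; exact: below_R (R_idem v) Hq.
have Hc : idem (inv v ** (R v ** q ** gi)).
  apply: fP; rewrite /idempotent_el.
  have -> : f (inv v ** (R v ** q ** gi)) = f (D v ** D gi).
    by rewrite fM (fM (R v ** q)) Hfq /D !fM ?mulJA.
  exact: f_idem (idem_mul (D_idem _) (D_idem _)).
by rewrite -(eq_compatible RvE Hc) R_mul_inv.
Qed.

Lemma generated_range_stable x :
  generated mul g x -> range_stable x /\ range_stable (inv x).
Proof.
elim=> [i | x1 y1 _ [Sx Sxi] _ [Sy Syi] | x1 y1 _ [Sx Sxi] Hinv].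
- by split; [exact: range_stable_gen | exact: range_stable_gen_inv].
- by split; [exact: range_stable_mul | rewrite invM; exact: range_stable_mul].
- by rewrite -(inv_uniq Hinv) invK; split.
Qed.

Definition prop_bool (P : Prop) : bool :=
  if excluded_middle_informative P then true else false.

Lemma prop_boolP P : prop_bool P = true <-> P.
Proof. by rewrite /prop_bool; case: excluded_middle_informative. Qed.

Definition signature x : {set J * 'I_k} :=
  [set ji | prop_bool (exists p, below (R x) (R (p ** g ji.2))
                                 /\ f (R x ** p) = ji.1)].

Lemma signatureP x p i :
  below (R x) (R (p ** g i)) -> (f (R x ** p), i) \in signature x.
Proof. by move=> Hle; rewrite inE; apply/prop_boolP; exists p. Qed.

(* If f x = f y and Sig x is contained in Sig y, then R y matches x;
   range stability of x then gives R (R y x) = R y, i.e. R y <= R x. *)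
Lemma signature_sub_below x y : generated mul g x -> f x = f y ->
  signature x \subset signature y -> below (R y) (R x).
Proof.
move=> Hgx Hxy Hsub.
have fRxy := f_R Hxy.
have RRy : R (R y) = R y by rewrite /R (inv_idem (R_idem y)) (R_idem y).
have Hm : matches (R y) x.
  rewrite /matches RRy; split => [p i Hle | i Hle].
  - move/(subsetP Hsub): (signatureP Hle); rewrite inE => /prop_boolP [q [Hq Hfq]].
    by exists q; split => //; rewrite Hfq fM fRxy -fM.
  - have Hle' : below (R x) (R (R x ** g i)).
      by rewrite (R_idem_mul _ (R_idem x)) /below mulA (R_idem x) Hle.
    move/(subsetP Hsub): (signatureP Hle'); rewrite inE => /prop_boolP [q [Hq Hfq]].
    by exists q; split => //; rewrite Hfq (R_idem x) fRxy.
have := proj1 (generated_range_stable Hgx) (R y) Hm.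
by rewrite RRy /below (R_idem_mul _ (R_idem y)).
Qed.

Lemma signature_inj x y : generated mul g x -> generated mul g y ->
  f x = f y -> signature x = signature y -> x = y.
Proof.
move=> Hgx Hgy Hxy HS.
have Hyx : below (R y) (R x).
  by apply: (signature_sub_below Hgx Hxy); rewrite HS subxx.
have Hxy' : below (R x) (R y).
  by apply: (signature_sub_below Hgy (esym Hxy)); rewrite HS subxx.
have HR : R x = R y by rewrite -Hxy' (idem_comm (R_idem x) (R_idem y)) Hyx.
exact: eq_compatible HR (compatible_of_f Hxy).
Qed.

(* Every generated element lies below some R (p g_i), so its signature is
   nonempty. *)
Definition anchored z := exists p i, below (R z) (R (p ** g i)).

Lemma anchored_mul x y : anchored x -> anchored (x ** y).
Proof.
by move=> [p [i Hle]]; exists p, i; exact: below_trans (R_mul_below x y) Hle.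
Qed.

Lemma generated_anchored x :
  generated mul g x -> anchored x /\ anchored (inv x).
Proof.
elim=> [i | x1 y1 _ [Ax Axi] _ [Ay Ayi] | x1 y1 _ [Ax Axi] Hinv].
- split.
  + exists (R (g i)), i; rewrite {2}/R mulKV; exact: R_idem.
  + exists (inv (g i)), i; rewrite R_inv -/(D (g i)) R_D; exact: D_idem.
- by split; [exact: anchored_mul | rewrite invM; exact: anchored_mul].
- by rewrite -(inv_uniq Hinv) invK; split.
Qed.

Lemma signature_neq0 x : generated mul g x -> signature x != set0.
Proof.
move=> /generated_anchored [[p [i Hle]] _]; apply/set0Pn.
by exists (f (R x ** p), i); exact: signatureP.
Qed.

End IdempotentPure.
End InverseSemigroup.

Lemma NoDup_length_le_card (X : Type) (T : finType) (A : {pred T})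
    (h : X -> T) (s : list X) :
  injective h -> (forall x, h x \in A) -> List.NoDup s -> List.length s <= #|A|.
Proof.
move=> h_inj hA Hs.
have In_of_map a l : h a \in map h l -> List.In a l.
  elim: l => //= b l IH; rewrite in_cons => /orP [/eqP /h_inj -> | /IH];
    by [left | right].
have uniq_hs : uniq (map h s).
  elim: Hs => //= a l a_notin _ ->; rewrite andbT.
  by apply/negP => /In_of_map.
have -> : List.length s = size (map h s) by rewrite size_map; elim: s {Hs uniq_hs}.
rewrite -(card_uniqP uniq_hs); apply: subset_leq_card.
apply/subsetP => t; elim: s {Hs uniq_hs} => //= x s IH.
by rewrite in_cons => /orP [/eqP -> | /IH].
Qed.

Lemma card_nonempty_pairs (J T : finType) :
  #|[set t : J * {set T} | t.2 != set0]| = #|J| * (2 ^ #|T| - 1).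
Proof.
have -> : [set t : J * {set T} | t.2 != set0] = setX [set: J] [set~ set0].
  by apply/setP => -[a b]; rewrite !inE.
by rewrite cardsX cardsT cardsC1 -[#|{set T}|]cardsT -powersetT card_powerset cardsT subn1.
Qed.

Theorem corollary3 (I : Type) (mulI : I -> I -> I) (k : nat) (g : 'I_k -> I)
  (J : finType) (mulJ : J -> J -> J) (n : nat) (f : I -> J) :
  inverse_semigroup mulI ->
  generates mulI g ->
  associative_op mulJ ->
  #|J| = n ->
  is_morphism mulI mulJ f ->
  (forall y : J, exists x : I, f x = y) ->
  idempotent_pure mulI mulJ f ->
  forall s : list I, List.NoDup s -> List.length s <= n * (2 ^ (k * n) - 1).
Proof.
move=> invS gen mulJA cardJ fM _ fP s Hs.
pose code x := (f x, signature invS f g x).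
have code_inj : injective code.
  by move=> x y [Hf HS]; exact: (signature_inj mulJA fM fP (gen x) (gen y) Hf HS).
have code_in x : code x \in [set t : J * {set J * 'I_k} | t.2 != set0].
  by rewrite inE; exact: signature_neq0 (gen x).
apply: leq_trans (NoDup_length_le_card code_inj code_in Hs) _.
by rewrite card_nonempty_pairs card_prod card_ord cardJ (mulnC n k).
Qed.
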